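(* Fix $i\in\{1,\dots,k\}$ and let $\pi_i$ and $\mathcal{M}^\pi_i$ be defined as in the context. Then $|\mathcal{M}^\pi_i|\le 3\epsilon\cdot 2^{kn}$.
   Context: Setting. $\mathcal{N}$ is a directed network containing nodes $s_1,\dots,s_k,t_1,\dots,t_k$. The network $\mathcal{G}$ is obtained from $\mathcal{N}$ by adding new nodes $s,t,A_1,\dots,A_k,B_1,\dots,B_k$ and, for each $i$, the unit-capacity edges $a_i=(s,A_i)$, two parallel edges $x_i,y_i$ from $A_i$ to $B_i$, $z_i=(A_i,s_i)$, $z'_i=(t_i,B_i)$, and $b_i=(B_i,t)$; the incoming edges of $t$ are exactly $b_1,\dots,b_k$. Admissible error patterns $\boldsymbol r=(r_e)$ are those in which at most one edge $e$ has $r_e\neq0$, with $e\notin\{a_1,\dots,a_k,b_1,\dots,b_k\}$. The output of an edge is its input XOR $r_e$. Let $\mathcal{C}$ be a length-$n$ network code on $\mathcal{G}$. The source $s$ has message $m\in[2^{kn}]$, where $[N]=\{1,\dots,N\}$. An edge $e=(u,v)$ of capacity $c_e$ carries a value in $[2^{nc_e}]$ computed from the signals on the incoming edges of $u$ (and from $m$ if $u=s$). The terminal $t$ decodes the tuple received on $(b_1,\dots,b_k)$ to a message. For an edge $e$, $e(m,\boldsymbol r)$ is the signal received on $e$ under message $m$ and error pattern $\boldsymbol r$, and $e(m)=e(m,\boldsymbol 0)$. Let $\mathcal{M}^{\text{good}}$ be the set of messages $m$ such that $t$ decodes to $m$ under every admissible error pattern when $m$ is sent. Assume $\epsilon\ge0$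 and $|\mathcal{M}^{\text{good}}|\ge(1-\epsilon)2^{kn}$. Define $\pi_i:[2^n]\to[2^n]$ by letting $\pi_i(\hat b)$ be a value $\hat a$ maximizing $|\{m\in\mathcal{M}^{\text{good}}:a_i(m)=\hat a,\ b_i(m)=\hat b\}|$, with ties broken arbitrarily. Let $\mathcal{M}^\pi_i=\{m\in\mathcal{M}^{\text{good}}:\pi_i(b_i(m))\ne a_i(m)\}$. *)

From mathcomp Require Import all_boot all_order all_algebra.
Set Implicit Arguments. Unset Strict Implicit. Unset Printing Implicit Defensive.

Inductive gnode (V : Type) (k : nat) : Type :=
  NodeN of V | NodeS | NodeT | NodeA of 'I_k | NodeB of 'I_k.
Arguments NodeN {V k}. Arguments NodeS {V k}. Arguments NodeT {V k}.
Arguments NodeA {V k}. Arguments NodeB {V k}.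

Inductive gedge (E : Type) (k : nat) : Type :=
  EdgeN of E | Ea of 'I_k | Ex of 'I_k | Ey of 'I_k
| Ez of 'I_k | Ez' of 'I_k | Eb of 'I_k.
Arguments EdgeN {E k}. Arguments Ea {E k}. Arguments Ex {E k}.
Arguments Ey {E k}. Arguments Ez {E k}. Arguments Ez' {E k}. Arguments Eb {E k}.

Section G.
Variables (V E : finType) (tail head : E -> V) (c : E -> nat) (k n : nat)
          (s_ t_ : 'I_k -> V).

Definition gtail (e : gedge E k) : gnode V k :=
  match e with
  | EdgeN e0 => NodeN (tail e0)
  | Ea _ => NodeS
  | Ex i | Ey i | Ez i => NodeA i
  | Ez' i => NodeN (t_ i)
  | Eb i => NodeB i
  end.

Definition ghead (e : gedge E k) : gnode V k :=
  match e with
  | EdgeN e0 => NodeN (head e0)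
  | Ea i => NodeA i
  | Ex i | Ey i => NodeB i
  | Ez i => NodeN (s_ i)
  | Ez' i => NodeB i
  | Eb _ => NodeT
  end.

(* number of bits carried by an edge: n * c_e (gadget edges have capacity 1) *)
Definition gbits (e : gedge E k) : nat :=
  match e with EdgeN e0 => n * c e0 | _ => n end.

(* a signal on edge e: an element of [2^(n c_e)], encoded as n c_e bits *)
Definition sig_val (e : gedge E k) := {ffun 'I_(gbits e) -> bool}.

Definition msg := 'I_(2 ^ (k * n)).

Definition signals := forall e : gedge E k, sig_val e.

Definition xorv m (x y : {ffun 'I_m -> bool}) : {ffun 'I_m -> bool} :=
  [ffun j => x j (+) y j].
Definition zerov m : {ffun 'I_m -> bool} := [ffun => false].

Definition zero_pattern : signals := fun e => zerov (gbits e).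

(* The encoding function of a network code: edge e computes its value from
   the message and the signals; [code_local] says it really only depends on
   the signals on the incoming edges of its tail, and on the message only if
   its tail is s. *)
Definition encoder := forall e : gedge E k, msg -> signals -> sig_val e.

Definition code_local (enc : encoder) : Prop :=
  forall (e : gedge E k) (m m' : msg) (sig sig' : signals),
    (forall e', ghead e' = gtail e -> sig e' = sig' e') ->
    (gtail e = NodeS -> m = m') ->
    enc e m sig = enc e m' sig'.

(* For an acyclic G, iterating the local update (#|E| + 6k + 1) times (more
   than the number of edges of G) from any start yields the unique consistent
   assignment. *)
Definition eval (enc : encoder) (m : msg) (r : signals) : signals :=
  iter (#|E| + 6 * k).+1
    (fun (sig : signals) (e : gedge E k) => xorv (enc e m sig) (r e))
    zero_pattern.

Definition admissible (r : signals) : Prop :=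
  (forall e e' : gedge E k, r e <> zerov _ -> r e' <> zerov _ -> e = e') /\
  (forall i : 'I_k, r (Ea i) = zerov _ /\ r (Eb i) = zerov _).

Definition decoder := ('I_k -> {ffun 'I_n -> bool}) -> msg.

Definition good (enc : encoder) (dec : decoder) (m : msg) : Prop :=
  forall r : signals, admissible r -> dec (fun i => eval enc m r (Eb i)) = m.

Definition a_sig (enc : encoder) (i : 'I_k) (m : msg) : {ffun 'I_n -> bool} :=
  eval enc m zero_pattern (Ea i).
Definition b_sig (enc : encoder) (i : 'I_k) (m : msg) : {ffun 'I_n -> bool} :=
  eval enc m zero_pattern (Eb i).

End G.

From mathcomp Require Import all_boot all_order all_algebra zify lra.
From mathcomp Require Import boolp.
Import Order.TTheory GRing.Theory Num.Theory.
Set Implicit Arguments. Unset Strict Implicit. Unset Printing Implicit Defensive.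

(* Call a good message rigid if no admissible error changes the word received
   by t.  Since t decodes every good message under every admissible error, the
   received words of distinct good messages are distinct, and a non-rigid
   message receives at least two of them: #good + #nonrigid <= 2^kn.
   For a rigid m, an error on z'_i can feed B_i any value on z'_i, so b_i(m) is
   a function of a_i(m); and an error on z_i makes everything outside the i-th
   gadget behave as for any m' with the same a_j (j <> i), so a rigid m is
   determined by its a_j (j <> i) and b_i(m).  Hence the words (a_j(m))_j of the
   rigid messages, and the same words with a_i(m) replaced by a value chosen
   from b_i(m) for the rigid "misfits" whose a_i differs from that value, are
   pairwise distinct: #rigid + #misfits <= 2^kn.  As pi is a majority choice,
   at most #nonrigid + #misfits good messages are mispredicted, and the three
   inequalities give at most 3 (2^kn - #good) <= 3 eps 2^kn. *)

Lemma ltn_count (T : Type) (p q : pred T) (s : seq T) :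
  subpred p q -> has (predD q p) s -> count p s < count q s.
Proof.
move=> pq; rewrite has_count => qp_pos.
have -> : count q s = count p s + count (predD q p) s.
  rewrite -count_predUI [X in _ + X](eq_count (a2 := pred0)) ?count_pred0 ?addn0.
    by apply: eq_count => x /=; case: (boolP (p x)) => [/pq ->|]; rewrite ?orbT ?orbF.
  by move=> x /=; case: (p x); rewrite ?andbF.
by rewrite -addn1 leq_add2l.
Qed.

Lemma card_setId_predC (T : finType) (A : {set T}) (p : pred T) :
  #|[set x in A | p x]| + #|[set x in A | ~~ p x]| = #|A|.
Proof.
rewrite -(cardsID [set x | p x] A) !setIdE setDE; congr (_ + #|A :&: _|).
by apply/setP => x; rewrite !inE.
Qed.

Lemma card_disjoint_injections (T U : finType) (A B : {set T}) (f g : T -> U) :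
  {in A &, injective f} -> {in B &, injective g} ->
  {in A & B, forall x y, f x != g y} -> #|A| + #|B| <= #|U|.
Proof.
move=> injf injg fg.
rewrite -(card_in_imset injf) -(card_in_imset injg) -cardsUI.
have -> : f @: A :&: g @: B = set0.
  apply/setP => u; rewrite !inE; apply/negP => /andP[/imsetP[x xA ->] /imsetP[y yB]].
  by apply/eqP; exact: fg.
by rewrite cards0 addn0 max_card.
Qed.

Lemma card_mismatch (T W U : finType) (A : {set T}) (a : T -> U) (b : T -> W)
    (r : W -> U) :
  #|[set x in A | r (b x) != a x]| =
  \sum_w (#|[set x in A | b x == w]| - #|[set x in A | (a x == r w) && (b x == w)]|).
Proof.
rewrite -sum1_card (partition_big b xpredT) //=; apply: eq_bigr => w _.
have -> : [set x in A | (a x == r w) && (b x == w)] =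
          [set x in A | b x == w] :&: [set x | a x == r w].
  by apply/setP => x; rewrite !inE; case: (x \in A) (a x == r w) (b x == w) => [] [] [].
rewrite -(cardsID [set x | a x == r w] [set x in A | b x == w]) addKn -sum1_card.
apply: eq_bigl => x; rewrite !inE.
by case: (eqVneq (b x) w) => [->|_]; rewrite ?andbT ?andbF // eq_sym andbC.
Qed.

Lemma leq_card_mismatch (T W U : finType) (A : {set T}) (a : T -> U) (b : T -> W)
    (p q : W -> U) :
  (forall w u, #|[set x in A | (a x == u) && (b x == w)]| <=
               #|[set x in A | (a x == p w) && (b x == w)]|) ->
  #|[set x in A | p (b x) != a x]| <= #|[set x in A | q (b x) != a x]|.
Proof.
by move=> p_max; rewrite !card_mismatch; apply: leq_sum => w _; apply: leq_sub2l.
Qed.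

Lemma xorv0 m (x : {ffun 'I_m -> bool}) : xorv x (zerov m) = x.
Proof. by apply/ffunP => j; rewrite !ffunE addbF. Qed.

Lemma xorvK m (x y : {ffun 'I_m -> bool}) : xorv x (xorv x y) = y.
Proof. by apply/ffunP => j; rewrite !ffunE addbA addbb. Qed.

Section Network.
Variables (V E : finType) (tail head : E -> V) (c : E -> nat) (k n : nat)
          (s_ t_ : 'I_k -> V).
Variable rank : V -> nat.
Hypothesis rank_edge : forall e, rank (tail e) < rank (head e).
Variable enc : encoder c k n.
Hypothesis enc_local : code_local tail head s_ t_ enc.

Local Notation edge := (gedge E k).
Local Notation signals := (signals c k n).
Local Notation gtail := (gtail tail t_).
Local Notation ghead := (ghead head s_).
Local Notation eval := (eval enc).
Local Notation zp := (zero_pattern c n).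

Definition grank (x : gnode V k) : nat :=
  match x with
  | NodeS => 0 | NodeA _ => 1 | NodeN v => (rank v).+2
  | NodeB _ => (\max_v rank v).+3 | NodeT => (\max_v rank v).+4
  end.

Lemma grank_edge (e : edge) : grank (gtail e) < grank (ghead e).
Proof.
case: e => [e0|j|j|j|j|j|j] //=; rewrite !ltnS //.
exact: (leq_bigmax (F := rank)).
Qed.

Definition edges : seq edge :=
  map EdgeN (enum E) ++ map Ea (enum 'I_k) ++ map Ex (enum 'I_k) ++
  map Ey (enum 'I_k) ++ map Ez (enum 'I_k) ++ map Ez' (enum 'I_k) ++
  map Eb (enum 'I_k).

Lemma size_edges : size edges = #|E| + 6 * k.
Proof. rewrite /edges !size_cat !size_map -!enumT size_enum_ord -cardT; lia. Qed.

Lemma has_edges (P : pred edge) e : P e -> has P edges.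
Proof.
have has_enum (T : finType) (f : T -> edge) x : P (f x) -> has (preim f P) (enum T).
  by move=> Pfx; apply/hasP; exists x; rewrite ?mem_enum.
rewrite /edges !has_cat !has_map -!enumT.
by case: e => [e0|j|j|j|j|j|j] /has_enum ->; rewrite ?orbT.
Qed.

(* Decreases along edges and stays below the number of iterations of eval. *)
Definition depth (e : edge) : nat :=
  count (fun x => grank (gtail x) < grank (gtail e)) edges.

Lemma depth_lt e e' : ghead e' = gtail e -> depth e' < depth e.
Proof.
move=> e'e; have lt_e'e : grank (gtail e') < grank (gtail e) by rewrite -e'e grank_edge.
apply: ltn_count => [x /= /ltn_trans|]; first exact.
by apply: (has_edges (e := e')); rewrite /= lt_e'e ltnn.
Qed.

Lemma depth_bound e : depth e <= #|E| + 6 * k.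
Proof. by rewrite -size_edges count_size. Qed.

Definition step m (r sig : signals) : signals := fun e => xorv (enc e m sig) (r e).

Definition consistent m r (sig : signals) := forall e, sig e = step m r sig e.

Lemma consistent_agree m1 r1 m2 r2 sig1 sig2 (P : edge -> Prop) :
  consistent m1 r1 sig1 -> consistent m2 r2 sig2 ->
  (forall e, P e -> (forall e', ghead e' = gtail e -> P e' -> sig1 e' = sig2 e') ->
     step m1 r1 sig1 e = step m2 r2 sig2 e) ->
  forall e, P e -> sig1 e = sig2 e.
Proof.
move=> con1 con2 stepP.
suff agree_t t e : depth e < t -> P e -> sig1 e = sig2 e by move=> e; apply: agree_t.
elim: t e => [//|t IH] e lt_et Pe; rewrite con1 con2; apply: stepP => // e' e'e Pe'.
by apply: IH => //; apply: leq_trans (depth_lt e'e) _; rewrite -ltnS.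
Qed.

Lemma eval_consistent m r : consistent m r (eval m r).
Proof.
suff iterS t (e : edge) : depth e < t ->
    iter t (step m r) zp e = iter t.+1 (step m r) zp e.
  by move=> e; rewrite /eval iterS // ltnS depth_bound.
elim: t e => [//|t IH] e lt_et /=.
congr xorv; apply: enc_local => // e' e'e.
by apply: IH; apply: leq_trans (depth_lt e'e) _; rewrite -ltnS.
Qed.

Lemma eval_upstream m r (P : edge -> Prop) :
  (forall e, P e -> r e = zerov _) ->
  (forall e e', P e -> ghead e' = gtail e -> P e') ->
  forall e, P e -> eval m r e = eval m zp e.
Proof.
move=> r0 P_closed.
apply: consistent_agree (eval_consistent _ _) (eval_consistent _ _) _ => e Pe IH.
rewrite /step (r0 e Pe); congr xorv; apply: enc_local => // e' e'e.
exact: IH (P_closed _ _ Pe e'e).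
Qed.

Lemma admissible_zp : admissible (zp : signals).
Proof. by split. Qed.

Lemma eval_error_free m e : eval m zp e = enc e m (eval m zp).
Proof. by rewrite {1}(eval_consistent m zp e) /step xorv0. Qed.

Lemma in_edge_S e' : ghead e' <> NodeS.
Proof. by case: e'. Qed.

Lemma in_edge_A e' j : ghead e' = NodeA j -> e' = Ea j.
Proof. by case: e' => //= j' [->]. Qed.

Lemma in_edge_B e' j : ghead e' = NodeB j -> [\/ e' = Ex j, e' = Ey j | e' = Ez' j].
Proof. by case: e' => //= j' [->]; [apply: Or31 | apply: Or32 | apply: Or33]. Qed.

Lemma in_edge_N e' v :
  ghead e' = NodeN v -> (exists e0, e' = EdgeN e0) \/ (exists j, e' = Ez j).
Proof. by case: e' => //= [e0 _ | j _]; [left; exists e0 | right; exists j]. Qed.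

Lemma enc_Ea j m sig : enc (Ea j) m sig = a_sig enc j m.
Proof. by rewrite /a_sig eval_error_free; apply: enc_local => // e' /in_edge_S. Qed.

Lemma enc_out_of_A m r e j : admissible r -> gtail e = NodeA j ->
  enc e m (eval m r) = eval m zp e.
Proof.
case=> _ r_ab te; rewrite eval_error_free; apply: enc_local => // e'.
rewrite te => /in_edge_A ->.
by rewrite !(eval_consistent _ _ (Ea j)) /step (proj1 (r_ab j)) !xorv0 !enc_Ea.
Qed.

Lemma eval_out_of_A m r e j : admissible r -> gtail e = NodeA j -> r e = zerov _ ->
  eval m r e = eval m zp e.
Proof.
by move=> ar te re; rewrite (eval_consistent m r e) /step re xorv0 (enc_out_of_A m ar te).
Qed.

Definition rigid m :=
  forall r, admissible r -> forall j, eval m r (Eb j) = b_sig enc j m.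

Variable i : 'I_k.

Definition err_z (w : {ffun 'I_n -> bool}) : signals :=
  fun e => match e as e0 return sig_val c n e0 with
           | Ez j => if j == i then w else zerov _
           | _ => zerov _
           end.

Definition err_z' (w : {ffun 'I_n -> bool}) : signals :=
  fun e => match e as e0 return sig_val c n e0 with
           | Ez' j => if j == i then w else zerov _
           | _ => zerov _
           end.

Lemma admissible_err_z w : admissible (err_z w).
Proof.
split=> // e e'; case: e => //= j; case: e' => //= j'.
by do 2 case: eqP => [->|] //.
Qed.

Lemma admissible_err_z' w : admissible (err_z' w).
Proof.
split=> // e e'; case: e => //= j; case: e' => //= j'.
by do 2 case: eqP => [->|] //.
Qed.

(* An error on z'_i can impose any value on the z'_i input of B_i. *)
Lemma enc_Eb_rigid m (sig : signals) : rigid m ->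
  sig (Ex i) = eval m zp (Ex i) -> sig (Ey i) = eval m zp (Ey i) ->
  enc (Eb i) m sig = b_sig enc i m.
Proof.
move=> m_rigid sig_x sig_y.
pose r := err_z' (xorv (eval m zp (Ez' i)) (sig (Ez' i))).
pose before_B (e : edge) := match e with Ez' _ | Eb _ => False | _ => True end.
have eval_up e : before_B e -> eval m r e = eval m zp e.
  apply: (@eval_upstream m r before_B) => [[] //|{}e e'].
  case: e => [e0|j|j|j|j|//|//] _ /=.
  - by case/in_edge_N => -[? ->].
  - by move/in_edge_S.
  - by move/in_edge_A ->.
  - by move/in_edge_A ->.
  - by move/in_edge_A ->.
have eval_z' : eval m r (Ez' i) = sig (Ez' i).
  rewrite (eval_consistent m r (Ez' i)) /step /= eqxx.
  suff -> : enc (Ez' i) m (eval m r) = eval m zp (Ez' i) by rewrite xorvK.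
  rewrite eval_error_free; apply: enc_local => // e' /in_edge_N.
  by case=> -[? ->]; apply: eval_up.
rewrite -(m_rigid r (admissible_err_z' _) i) (eval_consistent m r (Eb i)) /step xorv0.
by apply: enc_local => // e' /in_edge_B[] ->; rewrite ?eval_z' ?eval_up.
Qed.

(* The error on z_i replaces the signal entering s_i by its value under m'. *)
Lemma err_z_mimics m m' : (forall j, j != i -> a_sig enc j m = a_sig enc j m') ->
  exists r, [/\ admissible r, forall j, j != i -> eval m r (Eb j) = b_sig enc j m',
              eval m r (Ex i) = eval m zp (Ex i) & eval m r (Ey i) = eval m zp (Ey i)].
Proof.
move=> a_off_i; pose r := err_z (xorv (eval m zp (Ez i)) (eval m' zp (Ez i))).
have ar : admissible r := admissible_err_z _.
pose off_gadget (e : edge) :=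
  match e with Ea j | Ex j | Ey j | Eb j => j != i | _ => True end.
have eval_off e : off_gadget e -> eval m r e = eval m' zp e.
  apply: (@consistent_agree _ _ _ _ _ _ off_gadget
           (eval_consistent _ _) (eval_consistent _ _)) => {}e.
  case: e => [e0|j|j|j|j|j|j] /= off_e IH; rewrite /step.
  - congr xorv; apply: enc_local => // e' e'e; apply: IH => //.
    by case: (in_edge_N e'e) => -[? ->].
  - by rewrite !enc_Ea a_off_i.
  - by congr xorv; apply: enc_local => // e' /[dup] /in_edge_A -> e'e; apply: IH.
  - by congr xorv; apply: enc_local => // e' /[dup] /in_edge_A -> e'e; apply: IH.
  - rewrite /r /err_z; case: eqP => [->|/eqP j_i].
      by rewrite (enc_out_of_A (j := i) m ar) // xorvK xorv0 -eval_error_free.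
    by congr xorv; apply: enc_local => // e' /[dup] /in_edge_A -> e'e; apply: IH.
  - congr xorv; apply: enc_local => // e' e'e; apply: IH => //.
    by case: (in_edge_N e'e) => -[? ->].
  - congr xorv; apply: enc_local => // e' e'e; apply: IH => //.
    by case: (in_edge_B e'e) => ->.
exists r; split=> // [j j_i||]; first exact: eval_off.
all: exact: (eval_out_of_A (j := i) m).
Qed.

Lemma rigid_b_of_a m1 m2 : rigid m1 -> a_sig enc i m1 = a_sig enc i m2 ->
  b_sig enc i m1 = b_sig enc i m2.
Proof.
move=> m1_rigid a12.
have same_gadget e : gtail e = NodeA i -> eval m2 zp e = eval m1 zp e.
  move=> te; rewrite !eval_error_free.
  by apply: enc_local => [e'|]; rewrite te // => /in_edge_A ->.
rewrite [RHS]/b_sig eval_error_free -(enc_Eb_rigid (sig := eval m2 zp) m1_rigid);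
  rewrite ?same_gadget //.
by apply: (enc_local (e := Eb i)).
Qed.

Variable dec : decoder k n.

Lemma rigid_unique m m' : good enc dec m -> good enc dec m' -> rigid m ->
  (forall j, j != i -> a_sig enc j m = a_sig enc j m') ->
  b_sig enc i m = b_sig enc i m' -> m = m'.
Proof.
move=> m_good m'_good m_rigid a_off_i b_i.
have [r [ar b_off_i x_i y_i]] := err_z_mimics a_off_i.
rewrite -(m_good r ar) -(m'_good zp admissible_zp).
congr dec; apply: funext => j; case: (eqVneq j i) => [->|j_i]; last exact: b_off_i.
rewrite (eval_consistent m r (Eb i)) /step (proj2 (proj2 ar i)) xorv0.
by rewrite (enc_Eb_rigid m_rigid x_i y_i) b_i.
Qed.

Variable Mgood : {set msg k n}.
Hypothesis Mgood_good : forall m, m \in Mgood <-> good enc dec m.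

Local Notation word := {ffun 'I_n -> bool}.
Local Notation words := {ffun 'I_k -> word}.

Lemma card_words : #|{: words}| = 2 ^ (k * n).
Proof. by rewrite card_ffun card_ffun card_bool !card_ord -expnM mulnC. Qed.

Definition output m r : words := [ffun j => eval m r (Eb j)].

Definition outputs m : {set words} :=
  [set B | `[< exists2 r, admissible r & output m r = B >]].

Lemma output_in_outputs m r : admissible r -> output m r \in outputs m.
Proof. by move=> ar; rewrite inE; apply/asboolP; exists r. Qed.

Lemma decode_outputs m B : m \in Mgood -> B \in outputs m -> dec B = m.
Proof.
move=> /Mgood_good m_good; rewrite inE => /asboolP[r ar <-].
by rewrite -[RHS](m_good r ar); congr dec; apply: funext => j; rewrite ffunE.
Qed.

Definition rigidb m := outputs m \subset [set output m zp].

Lemma rigidP m : reflect (rigid m) (rigidb m).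
Proof.
apply: (iffP subsetP) => [sub r ar j | m_rigid B].
  have /sub := output_in_outputs m ar; rewrite inE => /eqP/ffunP/(_ j).
  by rewrite !ffunE.
rewrite !inE => /asboolP[r ar <-]; apply/eqP/ffunP => j; rewrite !ffunE.
exact: m_rigid.
Qed.

(* Meaningful only for non-rigid messages. *)
Definition alt_output m : words :=
  odflt (output m zp) [pick B in outputs m :\ output m zp].

Lemma alt_outputP m : ~~ rigidb m -> alt_output m \in outputs m :\ output m zp.
Proof.
rewrite /alt_output; case: pickP => [B //|none] /subsetPn[B B_out].
by rewrite inE => B_new; have := none B; rewrite in_setD1 B_new B_out.
Qed.

Lemma card_good_nonrigid :
  #|Mgood| + #|[set m in Mgood | ~~ rigidb m]| <= 2 ^ (k * n).
Proof.
have zp_out m : output m zp \in outputs m := output_in_outputs m admissible_zp.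
have alt_out m : m \in [set m in Mgood | ~~ rigidb m] ->
    [/\ m \in Mgood, alt_output m \in outputs m & alt_output m != output m zp].
  by rewrite inE => /andP[m_good /alt_outputP]; rewrite !inE => /andP[].
rewrite -[X in _ <= X]card_words.
apply: (card_disjoint_injections (f := output^~ zp) (g := alt_output)).
- move=> m1 m2 m1_good m2_good /= e.
  by rewrite -(decode_outputs m1_good (zp_out m1)) e (decode_outputs m2_good).
- move=> m1 m2 /alt_out[m1_good m1_alt _] /alt_out[m2_good m2_alt _] e.
  by rewrite -(decode_outputs m1_good m1_alt) e (decode_outputs m2_good).
- move=> m1 m2 m1_good /alt_out[m2_good m2_alt m2_new] /=; apply/eqP => e.
  have m12 : m1 = m2.
    by rewrite -(decode_outputs m1_good (zp_out m1)) e (decode_outputs m2_good).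
  by move: m2_new; rewrite -e m12 eqxx.
Qed.

Local Notation ai m := (a_sig enc i m).
Local Notation bi m := (b_sig enc i m).

Definition rigid_good := [set m in Mgood | rigidb m].

Lemma rigid_good_rigid m : m \in rigid_good -> rigid m.
Proof. by rewrite inE => /andP[_ /rigidP]. Qed.

Lemma rigid_good_unique m m' : m \in rigid_good -> m' \in Mgood ->
  (forall j, j != i -> a_sig enc j m = a_sig enc j m') -> bi m = bi m' -> m = m'.
Proof.
move=> m_rg /Mgood_good m'_good; apply: rigid_unique m'_good (rigid_good_rigid m_rg).
by move: m_rg; rewrite inE => /andP[/Mgood_good].
Qed.

(* a_i of some rigid good message with b_i = w; the fallback w is arbitrary. *)
Definition a_choice (w : word) : word :=
  if [pick p in rigid_good | bi p == w] is Some p then ai p else w.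

Lemma a_choiceP m : m \in rigid_good ->
  exists2 p, p \in rigid_good & bi p = bi m /\ a_choice (bi m) = ai p.
Proof.
move=> m_rg; rewrite /a_choice; case: pickP => [p /andP[p_rg /eqP bp] | none].
  by exists p.
by have := none m; rewrite m_rg eqxx.
Qed.

Lemma a_choice_b m m' : m \in rigid_good -> ai m' = a_choice (bi m) -> bi m' = bi m.
Proof.
move=> m_rg; have [p p_rg [<- ->]] := a_choiceP m_rg => a_m'.
exact/esym/(rigid_b_of_a (rigid_good_rigid p_rg)).
Qed.

Definition misfits := [set m in rigid_good | ai m != a_choice (bi m)].

Definition a_word m : words := [ffun j => a_sig enc j m].

Definition a_word_choice m : words :=
  [ffun j => if j == i then a_choice (bi m) else a_sig enc j m].

Lemma card_rigid_misfits : #|rigid_good| + #|misfits| <= 2 ^ (k * n).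
Proof.
have misfit_rg m : m \in misfits -> m \in rigid_good by rewrite inE => /andP[].
have rg_good m : m \in rigid_good -> m \in Mgood by rewrite inE => /andP[].
rewrite -[X in _ <= X]card_words.
apply: (card_disjoint_injections (f := a_word) (g := a_word_choice)).
- move=> m1 m2 m1_rg m2_rg /ffunP a12.
  have a_eq j : a_sig enc j m1 = a_sig enc j m2 by have := a12 j; rewrite !ffunE.
  apply: (rigid_good_unique m1_rg (rg_good _ m2_rg)) => [j _|]; first exact: a_eq.
  exact: rigid_b_of_a (rigid_good_rigid m1_rg) (a_eq i).
- move=> m1 m2 /misfit_rg m1_rg /misfit_rg m2_rg /ffunP a12.
  apply: (rigid_good_unique m1_rg (rg_good _ m2_rg)) => [j j_i|].
    by have := a12 j; rewrite !ffunE (negbTE j_i).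
  have [p p_rg [bp ap]] := a_choiceP m2_rg.
  have := a12 i; rewrite !ffunE eqxx ap => /esym/(a_choice_b m1_rg).
  by rewrite bp.
- move=> m1 m2 m1_rg /[dup] /misfit_rg m2_rg; rewrite inE => /andP[_ m2_misfit].
  apply/negP => /eqP/ffunP a12.
  have a_off_i j : j != i -> a_sig enc j m2 = a_sig enc j m1.
    by move=> j_i; have := a12 j; rewrite !ffunE (negbTE j_i).
  have a_i : ai m1 = a_choice (bi m2) by have := a12 i; rewrite !ffunE eqxx.
  have m21 := rigid_good_unique m2_rg (rg_good _ m1_rg) a_off_i
                 (esym (a_choice_b m2_rg a_i)).
  by move: m2_misfit; rewrite m21 a_i -m21 eqxx.
Qed.

Variable pi : word -> word.
Hypothesis pi_max : forall bh ah : word,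
  #|[set m in Mgood | (ai m == ah) && (bi m == bh)]| <=
  #|[set m in Mgood | (ai m == pi bh) && (bi m == bh)]|.

Lemma card_mispredicted :
  #|[set m in Mgood | pi (bi m) != ai m]| <=
  #|[set m in Mgood | ~~ rigidb m]| + #|misfits|.
Proof.
apply: leq_trans (leq_card_mismatch a_choice pi_max) _.
apply: leq_trans (leq_card_setU _ _); apply: subset_leq_card; apply/subsetP => m.
by rewrite !inE eq_sym => /andP[-> ->]; case: (rigidb m).
Qed.

Lemma card_mispredicted_bound :
  #|[set m in Mgood | pi (bi m) != ai m]| + 3 * #|Mgood| <= 3 * 2 ^ (k * n).
Proof.
have rigid_split : #|rigid_good| + #|[set m in Mgood | ~~ rigidb m]| = #|Mgood|.
  exact: card_setId_predC.
have := card_good_nonrigid; have := card_rigid_misfits; have := card_mispredicted.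
lia.
Qed.

End Network.

Local Open Scope ring_scope.

Theorem lemma3 (R : realFieldType) (V E : finType) (tail head : E -> V)
  (c : E -> nat) (k n : nat) (s_ t_ : 'I_k -> V)
  (Hacyclic : exists rank : V -> nat, forall e : E, (rank (tail e) < rank (head e))%N)
  (enc : encoder c k n) (Henc : code_local tail head s_ t_ enc)
  (dec : decoder k n)
  (Mgood : {set msg k n})
  (HMgood : forall m, m \in Mgood <-> good enc dec m)
  (eps : R) (Heps : 0 <= eps)
  (Hcard : (1 - eps) * (2 ^ (k * n))%:R <= (#|Mgood|%:R : R))
  (i : 'I_k) (pi : {ffun 'I_n -> bool} -> {ffun 'I_n -> bool})
  (Hpi : forall bh ah : {ffun 'I_n -> bool},
     (#|[set m in Mgood | (a_sig enc i m == ah) && (b_sig enc i m == bh)]|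
      <= #|[set m in Mgood | (a_sig enc i m == pi bh) && (b_sig enc i m == bh)]|)%N) :
  (#|[set m in Mgood | pi (b_sig enc i m) != a_sig enc i m]|%:R : R)
    <= 3 * eps * (2 ^ (k * n))%:R.
Proof.
have [rank rank_edge] := Hacyclic.
have := card_mispredicted_bound rank_edge Henc HMgood Hpi.
rewrite -(ler_nat R) natrD !natrM; move: Hcard.
lra.
Qed.
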